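(* Let $H\in\mathrm{C}(\mathbb{R}\times\mathbb{R})$ satisfy $\lim_{p\to\pm\infty}H(p,x)=\infty$ uniformly in $x\in\mathbb{R}$, let $x\mapsto H(p,x)$ be $1$-periodic for every $p$, and assume $H\in\mathrm{Lip}([-B,B]\times\mathbb{R})$ for every $B>0$. Then for each $\theta\in\mathbb{R}$ there exist a unique $\overline{H}(\theta)\in\mathbb{R}$ and a $1$-periodic $F_\theta\in\mathrm{C}^2(\mathbb{R})$ such that $$F_\theta''(x)+H(\theta+F_\theta'(x),x)=\overline{H}(\theta)\quad\text{for all }x\in\mathbb{R},$$ and moreover $p_-(\theta)\le\theta+F_\theta'(x)\le p_+(\theta)$ for all $x\in\mathbb{R}$.
   Context: For $\theta\in\mathbb{R}$, $U(\theta)=\max\{H(\theta,x):\,x\in[0,1]\}$, $p_-(\theta)=\min_{x\in[0,1]}\min\{p\in\mathbb{R}:\,H(p,x)\le U(\theta)\}$ and $p_+(\theta)=\max_{x\in[0,1]}\max\{p\in\mathbb{R}:\,H(p,x)\le U(\theta)\}$. Uniqueness of $\overline{H}(\theta)$ means: it is the only real number for which such a $1$-periodic $\mathrm{C}^2$ function exists. *)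

From Stdlib Require Import Reals.
From Coquelicot Require Import Coquelicot.
Open Scope R_scope.

(* U(theta) = max_{x in [0,1]} H(theta,x)  (a max: sup attained for continuous H) *)
Definition Ubar (H : R -> R -> R) (theta : R) : R :=
  real (Lub_Rbar (fun y => exists x, 0 <= x <= 1 /\ y = H theta x)).

Definition pminus (H : R -> R -> R) (theta : R) : R :=
  real (Glb_Rbar (fun p => exists x, 0 <= x <= 1 /\ H p x <= Ubar H theta)).

Definition pplus (H : R -> R -> R) (theta : R) : R :=
  real (Lub_Rbar (fun p => exists x, 0 <= x <= 1 /\ H p x <= Ubar H theta)).

Definition C2 (F : R -> R) : Prop :=
  (forall x, ex_derive F x) /\
  (forall x, ex_derive (Derive F) x) /\
  (forall x, continuous (Derive (Derive F)) x).

Definition periodic1 (F : R -> R) : Prop := forall x, F (x + 1) = F x.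

Definition cell_solution (H : R -> R -> R) (theta c : R) (F : R -> R) : Prop :=
  periodic1 F /\ C2 F /\
  forall x, Derive (Derive F) x + H (theta + Derive F x) x = c.

(* Writing [u = theta + F'], the cell problem is the periodic first-order equation
   [u' = c - H (u, x)] together with the condition that [u] has mean [theta].
   Truncating [H] outside a large interval in [p] makes this equation globally Lipschitz;
   Picard iteration in the weighted norm [sup |v t| exp (- 2 L |t|)] then gives solutions
   that depend Lipschitz-continuously on the data [(c, u 0)], and a comparison argument
   (a zero of [w] at which [w' > 0] can only be crossed upwards) makes [u 1] strictly
   increasing in [c].  Hence every initial value [a] has a unique speed [c a] with
   [u 1 = a], the corresponding orbit is periodic, [c] is continuous in [a], and the
   intermediate value theorem applied to the mean of the orbit yields mean [theta].
   The same comparison argument shows [c <= U theta] and keeps [u] inside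
   [[pminus theta, pplus theta]], where the truncation is invisible.  It also gives
   uniqueness: for two solutions with [c1 > c2], [F1' - F2'] would cross each of its zeros
   upwards, which a periodic function with a zero cannot do. *)

From Stdlib Require Import Reals Lra Lia Psatz.
From Coquelicot Require Import Coquelicot.
Open Scope R_scope.

Definition is_lipschitz (N : R) (f : R -> R) : Prop :=
  forall t s, Rabs (f t - f s) <= N * Rabs (t - s).

Lemma continuous_eps_delta (f : R -> R) (t : R) :
  continuous f t <->
  forall eps, 0 < eps -> exists d, 0 < d /\ forall y, Rabs (y - t) < d -> Rabs (f y - f t) < eps.
Proof.
  split.
  - intros Hf eps Heps.
    destruct (proj1 (continuity_pt_locally f t) (proj2 (continuity_pt_filterlim f t) Hf)
      (mkposreal eps Heps)) as [d Hd].
    exists d. split; [apply cond_pos | exact Hd].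
  - intro Hf. apply continuity_pt_filterlim, (proj2 (continuity_pt_locally _ _)). intro eps.
    destruct (Hf eps (cond_pos eps)) as [d [Hd Hy]].
    exists (mkposreal d Hd). exact Hy.
Qed.

Lemma continuous_of_lipschitz (f : R -> R) (N : R) :
  is_lipschitz N f -> forall t, continuous f t.
Proof.
  intros Hf t. apply continuous_eps_delta. intros eps Heps.
  assert (HN : 0 < Rabs N + 1) by (pose proof (Rabs_pos N); lra).
  exists (eps / (Rabs N + 1)). split; [apply Rdiv_lt_0_compat; lra|].
  intros y Hy. apply (Rmult_lt_compat_l (Rabs N + 1)) in Hy; [|lra].
  replace ((Rabs N + 1) * (eps / (Rabs N + 1))) with eps in Hy by (field; lra).
  pose proof (Rle_abs N). pose proof (Rabs_pos (y - t)). specialize (Hf y t). nra.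
Qed.

Lemma continuous_of_is_derive (f : R -> R) (x l : R) : is_derive f x l -> continuous f x.
Proof.
  intro Hd. apply (ex_derive_continuous (K := R_AbsRing) (V := R_NormedModule)).
  now exists l.
Qed.

Lemma is_derive_shift (f : R -> R) (h t l : R) :
  is_derive f (t + h) l -> is_derive (fun s => f (s + h)) t l.
Proof.
  intro Hd. pose proof (is_derive_comp f (fun s => s + h) t l 1 Hd) as Hc.
  unfold scal in Hc; simpl in Hc; unfold mult in Hc; simpl in Hc. rewrite Rmult_1_l in Hc.
  apply Hc. auto_derive; [exact I | ring].
Qed.

Lemma is_derive_reflect (f : R -> R) (t l : R) :
  is_derive f (- t) l -> is_derive (fun s => f (- s)) t (- l).
Proof.
  intro Hd. pose proof (is_derive_comp f (fun s => - s) t l (-1) Hd) as Hc.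
  unfold scal in Hc; simpl in Hc; unfold mult in Hc; simpl in Hc.
  replace (- l) with (-1 * l) by ring. apply Hc. auto_derive; [exact I | ring].
Qed.

Lemma is_derive_minus_const (f : R -> R) (k t l : R) :
  is_derive f t l -> is_derive (fun s => f s - k) t l.
Proof.
  intro Hd. pose proof (is_derive_minus f (fun _ => k) t l 0 Hd (is_derive_const k t)) as Hm.
  unfold minus, plus, opp in Hm; simpl in Hm. now rewrite Ropp_0, Rplus_0_r in Hm.
Qed.

Lemma lipschitz_of_derive_bound (f df : R -> R) (N : R) :
  (forall t, is_derive f t (df t)) -> (forall t, Rabs (df t) <= N) -> is_lipschitz N f.
Proof.
  intros Hd Hb t s. destruct (MVT_gen f s t df) as [c [_ ->]].
  - intros; apply Hd.
  - intros x _. apply continuity_pt_filterlim, (continuous_of_is_derive _ _ (df x)), Hd.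
  - rewrite Rabs_mult. apply Rmult_le_compat_r; [apply Rabs_pos | apply Hb].
Qed.

Lemma ex_RInt_of_continuous (g : R -> R) (a b : R) :
  (forall s, continuous g s) -> ex_RInt g a b.
Proof. intro Hg. apply (ex_RInt_continuous (V := R_CompleteNormedModule)). intros; apply Hg. Qed.

Lemma RInt_minus_continuous (f g : R -> R) (a b : R) :
  (forall s, continuous f s) -> (forall s, continuous g s) ->
  RInt (fun x => f x - g x) a b = RInt f a b - RInt g a b.
Proof.
  intros Hf Hg. apply (RInt_minus (V := R_CompleteNormedModule)); apply ex_RInt_of_continuous; auto.
Qed.

Lemma is_derive_RInt_0 (phi : R -> R) :
  (forall s, continuous phi s) -> forall t, is_derive (fun t => RInt phi 0 t) t (phi t).
Proof.
  intros Hc t. apply (is_derive_RInt (V := R_NormedModule) phi _ 0 t); [|apply Hc].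
  apply filter_forall. intro x. apply (RInt_correct (V := R_CompleteNormedModule)).
  apply ex_RInt_of_continuous, Hc.
Qed.

Lemma RInt_mean_value (u : R -> R) :
  (forall s, continuous u s) -> exists a, 0 <= a <= 1 /\ u a = RInt u 0 1.
Proof.
  intro Hc. destruct (MVT_gen (fun t => RInt u 0 t) 0 1 u) as [a [Ha Hmvt]].
  - intros; now apply is_derive_RInt_0.
  - intros x _. apply continuity_pt_filterlim, (continuous_of_is_derive _ _ (u x)).
    now apply is_derive_RInt_0.
  - exists a. rewrite Rmin_left, Rmax_right in Ha by lra. split; [exact Ha|].
    rewrite RInt_point in Hmvt. unfold zero in Hmvt; simpl in Hmvt. lra.
Qed.

Lemma abs_RInt_le_is_RInt (g h : R -> R) (a b I : R) : a <= b ->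
  (forall s, continuous g s) -> is_RInt h a b I ->
  (forall s, a <= s <= b -> Rabs (g s) <= h s) -> Rabs (RInt g a b) <= I.
Proof.
  intros Hab Hg Hh Hgh. rewrite <- (is_RInt_unique h a b I Hh).
  eapply Rle_trans; [apply abs_RInt_le; [exact Hab | apply ex_RInt_of_continuous, Hg]|].
  apply RInt_le; [exact Hab | | now exists I | intros; apply Hgh; lra].
  apply ex_RInt_of_continuous. intro s. now apply continuous_Rabs_comp.
Qed.

Definition exp_weight (L t : R) : R := exp (2 * L * Rabs t).

Lemma exp_weight_ge1 (L t : R) : 0 <= L -> 1 <= exp_weight L t.
Proof.
  intro HL. eapply Rle_trans; [|apply exp_ineq1_le]. pose proof (Rabs_pos t). nra.
Qed.

Lemma exp_weight_ge (L t : R) : 1 <= L -> 1 + Rabs t <= exp_weight L t.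
Proof.
  intro HL. eapply Rle_trans; [|apply exp_ineq1_le]. pose proof (Rabs_pos t). nra.
Qed.

Lemma exp_weight_le (L t s : R) : 0 <= L -> Rabs t <= Rabs s -> exp_weight L t <= exp_weight L s.
Proof.
  intros HL Hts. unfold exp_weight.
  destruct (Rle_lt_or_eq_dec (2 * L * Rabs t) (2 * L * Rabs s)) as [Hlt|Heq]; [nra| |].
  - left. now apply exp_increasing.
  - rewrite Heq. lra.
Qed.

Lemma abs_RInt_exp_weight (g : R -> R) (L K t : R) : 0 < L ->
  (forall s, continuous g s) -> (forall s, Rabs (g s) <= K * exp_weight L s) ->
  Rabs (RInt g 0 t) <= K * (exp_weight L t - 1) / (2 * L).
Proof.
  intros HL Hg Hgb. unfold exp_weight in *.
  assert (Hexp_cont : forall b s, continuous (fun s => K * exp (b * s)) s).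
  { intros b s. apply continuity_pt_filterlim.
    apply (continuity_pt_comp (fun s => b * s) (fun y => K * exp y)).
    - apply derivable_continuous_pt. auto_derive. exact I.
    - apply derivable_continuous_pt. auto_derive. exact I. }
  destruct (Rle_or_lt 0 t) as [Ht|Ht].
  - apply (abs_RInt_le_is_RInt g (fun s => K * exp (2 * L * s))); auto.
    + replace (K * (exp (2 * L * Rabs t) - 1) / (2 * L))
        with (minus (K * exp (2 * L * t) / (2 * L)) (K * exp (2 * L * 0) / (2 * L)))
        by (rewrite Rabs_right by lra; unfold minus, plus, opp; simpl;
            rewrite Rmult_0_r, exp_0; field; lra).
      apply (is_RInt_derive (V := R_CompleteNormedModule) (fun s => K * exp (2 * L * s) / (2 * L))).
      * intros x _. auto_derive; [exact I | field; lra].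
      * intros x _. apply Hexp_cont.
    + intros s Hs. replace (2 * L * s) with (2 * L * Rabs s) by (rewrite Rabs_right by lra; ring).
      apply Hgb.
  - rewrite <- opp_RInt_swap by (apply ex_RInt_of_continuous, Hg).
    unfold opp; simpl. rewrite Rabs_Ropp.
    apply (abs_RInt_le_is_RInt g (fun s => K * exp (- (2 * L) * s))); [lra|auto| |].
    + replace (K * (exp (2 * L * Rabs t) - 1) / (2 * L))
        with (minus (- K * exp (- (2 * L) * 0) / (2 * L)) (- K * exp (- (2 * L) * t) / (2 * L)))
        by (rewrite Rabs_left by lra; unfold minus, plus, opp; simpl;
            rewrite Rmult_0_r, exp_0; replace (2 * L * - t) with (- (2 * L) * t) by ring;
            field; lra).
      apply (is_RInt_derive (V := R_CompleteNormedModule) (fun s => - K * exp (- (2 * L) * s) / (2 * L))).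
      * intros x _. auto_derive; [exact I | field; lra].
      * intros x _. apply Hexp_cont.
    + intros s Hs. replace (- (2 * L) * s) with (2 * L * Rabs s) by (rewrite Rabs_left1 by lra; ring).
      apply Hgb.
Qed.

Lemma le_0_of_le_geom (x E : R) : (forall k : nat, x <= E * (/ 2) ^ k) -> x <= 0.
Proof.
  intro Hx.
  assert (Hlim : is_lim_seq (fun k => E * (/ 2) ^ k) 0).
  { replace (Finite 0) with (Rbar_mult E 0) by (simpl; f_equal; ring).
    apply is_lim_seq_scal_l, is_lim_seq_geom. rewrite Rabs_right; lra. }
  exact (is_lim_seq_le (fun _ => x) _ x 0 Hx (is_lim_seq_const x) Hlim).
Qed.

Lemma weighted_bound_halving (f e : R -> R) (d K0 : R) :
  (forall K, (forall s, f s <= K * e s) -> forall s, f s <= (d + K / 2) * e s) ->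
  (forall s, f s <= K0 * e s) -> forall s, f s <= 2 * d * e s.
Proof.
  intros Hstep H0.
  assert (Hn : forall n s, f s <= (2 * d + (K0 - 2 * d) * (/ 2) ^ n) * e s).
  { induction n as [|n IH]; intro s.
    - simpl. replace ((2 * d + (K0 - 2 * d) * 1) * e s) with (K0 * e s) by ring. apply H0.
    - eapply Rle_trans; [apply (Hstep _ IH)|]. right. simpl. field. }
  intro s. enough (f s - 2 * d * e s <= 0) by lra.
  apply (le_0_of_le_geom _ ((K0 - 2 * d) * e s)). intro k.
  specialize (Hn k s). lra.
Qed.

Lemma Rabs_triang3 (x y p q : R) : Rabs (x - y) <= Rabs (x - p) + Rabs (p - q) + Rabs (y - q).
Proof.
  replace (x - y) with ((x - p) + (p - q) + (q - y)) by ring. rewrite (Rabs_minus_sym y q).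
  eapply Rle_trans; [apply Rabs_triang|]. apply Rplus_le_compat_r, Rabs_triang.
Qed.

Lemma Lim_seq_geometric_bound (b : nat -> R) (C : R) :
  (forall k, Rabs (b (S k) - b k) <= C * (/ 2) ^ k) ->
  forall k, Rabs (Lim_seq b - b k) <= 2 * C * (/ 2) ^ k.
Proof.
  intro Hb.
  assert (HC : 0 <= C)
    by (specialize (Hb 0%nat); simpl in Hb; pose proof (Rabs_pos (b 1%nat - b 0%nat)); lra).
  assert (Hpow : forall k, 0 <= (/ 2) ^ k) by (intro; apply pow_le; lra).
  assert (Htail : forall k m, Rabs (b (m + k)%nat - b k) <= 2 * C * (/ 2) ^ k * (1 - (/ 2) ^ m)).
  { intros k m. induction m as [|m IH]; simpl.
    - rewrite Rminus_diag, Rabs_R0. lra.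
    - replace (b (S (m + k)) - b k) with ((b (S (m + k)) - b (m + k)%nat) + (b (m + k)%nat - b k)) by ring.
      eapply Rle_trans; [apply Rabs_triang|].
      specialize (Hb (m + k)%nat). rewrite pow_add in Hb. nra. }
  assert (Hcauchy : forall k m, (k <= m)%nat -> Rabs (b m - b k) <= 2 * C * (/ 2) ^ k).
  { intros k m Hkm. replace m with ((m - k) + k)%nat by lia.
    eapply Rle_trans; [apply Htail|].
    assert (0 <= 2 * C * (/ 2) ^ k) by (pose proof (Hpow k); nra). pose proof (Hpow (m - k)%nat). nra. }
  assert (Hex : ex_finite_lim_seq b).
  { apply ex_lim_seq_cauchy_corr. intro eps.
    destruct (pow_lt_1_zero (/ 2) ltac:(rewrite Rabs_right; lra) (eps / (4 * C + 1)))
      as [N HN]; [apply Rdiv_lt_0_compat; [apply cond_pos | lra]|].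
    exists N. intros n m Hn Hm.
    specialize (HN N (le_n N)). rewrite Rabs_right in HN by (apply Rle_ge, Hpow).
    apply (Rmult_lt_compat_l (4 * C + 1)) in HN; [|lra].
    replace ((4 * C + 1) * (eps / (4 * C + 1))) with (pos eps) in HN by (field; lra).
    pose proof (Hcauchy N n Hn). pose proof (Hcauchy N m Hm). specialize (Hpow N).
    replace (b n - b m) with ((b n - b N) - (b m - b N)) by ring.
    eapply Rle_lt_trans; [apply Rabs_triang|]. rewrite Rabs_Ropp. nra. }
  intro k. destruct Hex as [l Hl]. rewrite (is_lim_seq_unique b l Hl).
  change (Rbar_le (Rabs (l - b k)) (2 * C * (/ 2) ^ k)).
  apply (is_lim_seq_le_loc (fun n => Rabs (b n - b k)) (fun _ => 2 * C * (/ 2) ^ k)).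
  - exists k. intros n Hn. now apply Hcauchy.
  - apply (is_lim_seq_abs (fun n => b n - b k) (l - b k)).
    apply is_lim_seq_minus'; [exact Hl | apply is_lim_seq_const].
  - apply is_lim_seq_const.
Qed.

Section Periodic.

Variable f : R -> R.
Hypothesis f_per : periodic1 f.

Lemma periodic_shift_nat (n : nat) (x : R) : f (x + INR n) = f x.
Proof.
  induction n as [|n IH]; [simpl; now rewrite Rplus_0_r|].
  rewrite S_INR, <- Rplus_assoc, f_per. exact IH.
Qed.

Lemma periodic_reduce (x : R) : exists y, 0 <= y <= 1 /\ f x = f y.
Proof.
  destruct (Rle_or_lt 0 x) as [Hx|Hx].
  - destruct (nfloor_ex x Hx) as [n Hn]. exists (x - INR n). split; [lra|].
    rewrite <- (periodic_shift_nat n (x - INR n)). f_equal. ring.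
  - destruct (nfloor_ex (- x) ltac:(lra)) as [n Hn]. exists (x + INR (S n)).
    rewrite S_INR. split; [lra|]. rewrite <- S_INR. symmetry. apply periodic_shift_nat.
Qed.

Lemma periodic_value_after (a x : R) : exists b, a < b /\ f b = f x.
Proof.
  destruct (INR_unbounded (a - x)) as [n Hn].
  exists (x + INR n). split; [lra | apply periodic_shift_nat].
Qed.

End Periodic.

Lemma Derive_periodic (F : R -> R) :
  periodic1 F -> (forall x, ex_derive F x) -> periodic1 (Derive F).
Proof.
  intros Hper Hd x. symmetry. apply is_derive_unique.
  apply (is_derive_ext (fun t => F (t + 1))); [intro; apply Hper|].
  apply is_derive_shift, Derive_correct, Hd.
Qed.

Lemma periodic_derive_zero (F dF : R -> R) :
  periodic1 F -> (forall x, is_derive F x (dF x)) -> exists a, dF a = 0.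
Proof.
  intros Hper Hd. destruct (MVT_gen F 0 1 dF) as [a [_ Ha]].
  - intros; apply Hd.
  - intros x _. apply continuity_pt_filterlim, (continuous_of_is_derive _ _ (dF x)), Hd.
  - exists a. rewrite <- (Rplus_0_l 1), Hper in Ha. lra.
Qed.

Lemma sign_near_transversal_zero (w : R -> R) (s d : R) :
  is_derive w s d -> 0 < d -> w s = 0 ->
  exists del, 0 < del /\ forall t, Rabs (t - s) < del -> t <> s -> 0 < w t * (t - s).
Proof.
  intros Hd Hpos H0. apply is_derive_Reals in Hd.
  destruct (Hd (d / 2)) as [del Hdel]; [lra|].
  exists del. split; [apply cond_pos|]. intros t Ht Hts.
  specialize (Hdel (t - s) ltac:(lra) Ht).
  replace (s + (t - s)) with t in Hdel by ring. rewrite H0, Rminus_0_r in Hdel.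
  apply Rabs_def2 in Hdel.
  assert (Hq : 0 < w t / (t - s)) by lra.
  replace (w t * (t - s)) with (w t / (t - s) * ((t - s) * (t - s))) by (field; lra).
  apply Rmult_lt_0_compat; [exact Hq|]. assert (t - s <> 0) by lra. nra.
Qed.

Section TransversalZeros.

Variables w dw : R -> R.
Hypothesis w_derive : forall t, is_derive w t (dw t).
Hypothesis w_transversal : forall t, w t = 0 -> 0 < dw t.

Lemma transversal_pos_persists (a b : R) : a < b -> 0 < w a -> 0 < w b.
Proof.
  intros Hab Ha. apply Rnot_le_lt. intro Hb.
  set (E := fun t => a <= t <= b /\ forall r, a <= r <= t -> 0 < w r).
  assert (Ea : E a) by (split; [lra | intros r Hr; now replace r with a by lra]).
  destruct (completeness E) as [s [Hub Hlub]]; [exists b; intros t [Ht _]; lra | now exists a |].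
  assert (Has : a <= s) by now apply Hub.
  assert (Hsb : s <= b) by (apply Hlub; intros t [Ht _]; lra).
  assert (Hbefore : forall r, a <= r < s -> 0 < w r).
  { intros r Hr. apply Rnot_le_lt. intro Hr0.
    assert (r < s) as Hrs by lra. apply (Rlt_not_le _ _ Hrs), Hlub.
    intros t [Ht Hall]. apply Rnot_lt_le. intro Hrt. specialize (Hall r). lra. }
  assert (Hcont : continuous w s) by apply (continuous_of_is_derive _ _ _ (w_derive s)).
  rewrite continuous_eps_delta in Hcont.
  destruct (Rlt_or_le 0 (w s)) as [Hpos|Hnonpos].
  - destruct (Hcont (w s) Hpos) as [d [Hd Hnear]].
    assert (s < b) by (destruct Hsb as [| ->]; lra).
    set (t := Rmin b (s + d / 2)).
    assert (Ht : s < t <= b /\ t <= s + d / 2) by (unfold t, Rmin; destruct Rle_dec; lra).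
    assert (Et : E t).
    { split; [lra|]. intros r Hr. destruct (Rlt_or_le r s); [apply Hbefore; lra|].
      specialize (Hnear r ltac:(apply Rabs_def1; lra)). apply Rabs_def2 in Hnear. lra. }
    specialize (Hub t Et). lra.
  - assert (Hleft : exists d, 0 < d /\ forall r, s - d < r < s -> w r < 0).
    { destruct Hnonpos as [Hneg|Hzero].
      - destruct (Hcont (- w s) ltac:(lra)) as [d [Hd Hnear]]. exists d. split; [exact Hd|].
        intros r Hr. specialize (Hnear r ltac:(apply Rabs_def1; lra)). apply Rabs_def2 in Hnear. lra.
      - destruct (sign_near_transversal_zero w s (dw s) (w_derive s) (w_transversal s Hzero) Hzero)
          as [d [Hd Hnear]]. exists d. split; [exact Hd|].
        intros r Hr. specialize (Hnear r ltac:(apply Rabs_def1; lra) ltac:(lra)). nra. }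
    destruct Hleft as [d [Hd Hleft]].
    assert (a < s) by (destruct Has as [| <-]; lra).
    set (r := Rmax a (s - d / 2)).
    assert (Hr : a <= r < s /\ s - d < r) by (unfold r, Rmax; destruct Rle_dec; lra).
    specialize (Hleft r ltac:(lra)). specialize (Hbefore r ltac:(lra)). lra.
Qed.

Lemma transversal_pos_after (a b : R) : a < b -> 0 <= w a -> 0 < w b.
Proof.
  intros Hab [Ha|Ha]; [now apply (transversal_pos_persists a)|].
  destruct (sign_near_transversal_zero w a (dw a) (w_derive a) (w_transversal a (eq_sym Ha)) (eq_sym Ha))
    as [d [Hd Hnear]].
  assert (Hright : forall t, a < t < a + d -> 0 < w t).
  { intros t Ht. specialize (Hnear t ltac:(apply Rabs_def1; lra) ltac:(lra)). nra. }
  destruct (Rlt_or_le b (a + d)); [apply Hright; lra|].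
  apply (transversal_pos_persists (a + d / 2)); [lra | apply Hright; lra].
Qed.

End TransversalZeros.

Lemma periodic_no_transversal_zero (w dw : R -> R) :
  periodic1 w -> (forall t, is_derive w t (dw t)) -> (forall t, w t = 0 -> 0 < dw t) ->
  forall a, w a <> 0.
Proof.
  intros Hper Hd Hz a Ha.
  pose proof (transversal_pos_after w dw Hd Hz a (a + 1) ltac:(lra) ltac:(lra)) as Hpos.
  rewrite Hper in Hpos. lra.
Qed.

Definition picard_map (G : R -> R -> R) (c a : R) (v : R -> R) (t : R) : R :=
  a + RInt (fun s => c - G (v s) s) 0 t.

Definition is_ode_sol (G : R -> R -> R) (c a : R) (v : R -> R) : Prop :=
  v 0 = a /\ forall t, is_derive v t (c - G (v t) t).

Section LipschitzODE.

Variables (G : R -> R -> R) (L M : R).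
Hypothesis L_ge1 : 1 <= L.
Hypothesis G_lip : forall u v t s, Rabs (G u t - G v s) <= L * (Rabs (u - v) + Rabs (t - s)).
Hypothesis G_bound : forall u t, Rabs (G u t) <= M.

Lemma G_bound_ge0 : 0 <= M.
Proof. pose proof (G_bound 0 0). pose proof (Rabs_pos (G 0 0)). lra. Qed.

Lemma ode_rhs_continuous (c N : R) (v : R -> R) :
  is_lipschitz N v -> forall t, continuous (fun s => c - G (v s) s) t.
Proof.
  intro Hv. apply (continuous_of_lipschitz _ (L * (N + 1))). intros t s.
  replace (c - G (v t) t - (c - G (v s) s)) with (- (G (v t) t - G (v s) s)) by ring.
  rewrite Rabs_Ropp. eapply Rle_trans; [apply G_lip|].
  specialize (Hv t s). pose proof (Rabs_pos (t - s)). nra.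
Qed.

Lemma picard_map_derive (c a N : R) (v : R -> R) : is_lipschitz N v ->
  forall t, is_derive (picard_map G c a v) t (c - G (v t) t).
Proof.
  intros Hv t.
  pose proof (is_derive_plus (fun _ => a) (fun t => RInt (fun s => c - G (v s) s) 0 t) t
    0 (c - G (v t) t) (is_derive_const a t)
    (is_derive_RInt_0 _ (ode_rhs_continuous c N v Hv) t)) as Hd.
  unfold plus in Hd; simpl in Hd. now rewrite Rplus_0_l in Hd.
Qed.

Lemma picard_map_0 (c a : R) (v : R -> R) : picard_map G c a v 0 = a.
Proof. unfold picard_map. rewrite RInt_point. unfold zero; simpl. ring. Qed.

Lemma picard_map_lipschitz (c a N : R) (v : R -> R) :
  is_lipschitz N v -> is_lipschitz (Rabs c + M) (picard_map G c a v).
Proof.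
  intro Hv. apply (lipschitz_of_derive_bound _ _ _ (picard_map_derive c a N v Hv)).
  intro t. eapply Rle_trans; [apply Rabs_triang|]. rewrite Rabs_Ropp.
  specialize (G_bound (v t) t). lra.
Qed.

(* Integrating [L K exp (2 L |s|)] from [0] to [t] gives at most [K exp (2 L |t|) / 2]:
   in this weighted norm the Picard map contracts by the factor 1/2. *)
Lemma picard_map_contraction (c1 a1 N1 c2 a2 N2 K : R) (v1 v2 : R -> R) :
  is_lipschitz N1 v1 -> is_lipschitz N2 v2 ->
  (forall s, Rabs (v1 s - v2 s) <= K * exp_weight L s) ->
  forall t, Rabs (picard_map G c1 a1 v1 t - picard_map G c2 a2 v2 t)
            <= (Rabs (a1 - a2) + Rabs (c1 - c2) + K / 2) * exp_weight L t.
Proof.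
  intros Hv1 Hv2 Hv t.
  assert (Hw : forall s, 1 <= exp_weight L s) by (intro; apply exp_weight_ge1; lra).
  assert (HK : 0 <= K).
  { specialize (Hv 0). specialize (Hw 0). pose proof (Rabs_pos (v1 0 - v2 0)). nra. }
  set (D := Rabs (c1 - c2) + L * K).
  assert (Hint : Rabs (RInt (fun s => (c1 - G (v1 s) s) - (c2 - G (v2 s) s)) 0 t)
                 <= D * (exp_weight L t - 1) / (2 * L)).
  { apply abs_RInt_exp_weight; [lra| |].
    - intro s. apply (continuous_minus (V := R_NormedModule) (fun s => c1 - G (v1 s) s));
        [now apply ode_rhs_continuous with N1 | now apply ode_rhs_continuous with N2].
    - intro s. replace ((c1 - G (v1 s) s) - (c2 - G (v2 s) s))
        with ((c1 - c2) - (G (v1 s) s - G (v2 s) s)) by ring.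
      eapply Rle_trans; [apply Rabs_triang|]. rewrite Rabs_Ropp.
      pose proof (G_lip (v1 s) (v2 s) s s) as Hl. rewrite Rminus_diag, Rabs_R0, Rplus_0_r in Hl.
      specialize (Hv s). specialize (Hw s). pose proof (Rabs_pos (c1 - c2)).
      unfold D. nra. }
  unfold picard_map.
  replace (a1 + RInt (fun s => c1 - G (v1 s) s) 0 t - (a2 + RInt (fun s => c2 - G (v2 s) s) 0 t))
    with ((a1 - a2) + RInt (fun s => (c1 - G (v1 s) s) - (c2 - G (v2 s) s)) 0 t)
    by (rewrite RInt_minus_continuous;
        [ring | now apply ode_rhs_continuous with N1 | now apply ode_rhs_continuous with N2]).
  eapply Rle_trans; [apply Rabs_triang|].
  assert (Hhalf : D * (exp_weight L t - 1) / (2 * L) <= (Rabs (c1 - c2) + K) / 2 * exp_weight L t).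
  { specialize (Hw t). pose proof (Rabs_pos (c1 - c2)).
    apply (Rmult_le_reg_l (2 * L)); [lra|]. unfold D.
    replace (2 * L * ((Rabs (c1 - c2) + L * K) * (exp_weight L t - 1) / (2 * L)))
      with ((Rabs (c1 - c2) + L * K) * (exp_weight L t - 1)) by (field; lra).
    assert (0 <= (L - 1) * (Rabs (c1 - c2) * exp_weight L t)) by (apply Rmult_le_pos; nra).
    nra. }
  specialize (Hw t).
  assert (0 <= Rabs (a1 - a2) * (exp_weight L t - 1)) by (apply Rmult_le_pos; [apply Rabs_pos | lra]).
  assert (0 <= Rabs (c1 - c2) * exp_weight L t) by (apply Rmult_le_pos; [apply Rabs_pos | lra]).
  nra.
Qed.

Fixpoint picard (c a : R) (k : nat) : R -> R :=
  match k with
  | O => fun _ => a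
  | S k => picard_map G c a (picard c a k)
  end.

Lemma picard_lipschitz (c a : R) (k : nat) : is_lipschitz (Rabs c + M) (picard c a k).
Proof.
  induction k as [|k IH]; simpl; [|exact (picard_map_lipschitz c a _ _ IH)].
  intros t s. rewrite Rminus_diag, Rabs_R0. pose proof (Rabs_pos c). pose proof G_bound_ge0.
  apply Rmult_le_pos; [lra | apply Rabs_pos].
Qed.

Lemma picard_step (c a : R) (k : nat) (t : R) :
  Rabs (picard c a (S k) t - picard c a k t) <= (Rabs c + M) * exp_weight L t * (/ 2) ^ k.
Proof.
  revert t. induction k as [|k IH]; intro t.
  - simpl picard. rewrite <- (picard_map_0 c a (fun _ => a)) at 2.
    eapply Rle_trans; [apply (picard_map_lipschitz c a 0); intros u v; rewrite Rminus_diag, Rabs_R0; lra|].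
    rewrite Rminus_0_r, pow_O, Rmult_1_r. pose proof (Rabs_pos c). pose proof G_bound_ge0.
    apply Rmult_le_compat_l; [lra|]. pose proof (exp_weight_ge L t L_ge1). lra.
  - eapply Rle_trans.
    { apply (picard_map_contraction c a (Rabs c + M) c a (Rabs c + M) ((Rabs c + M) * (/ 2) ^ k)
        (picard c a (S k)) (picard c a k)); try apply picard_lipschitz.
      intro s. eapply Rle_trans; [apply IH | right; ring]. }
    rewrite !Rminus_diag, Rabs_R0. right. simpl. field.
Qed.

Definition picard_sol (c a t : R) : R := real (Lim_seq (fun k => picard c a k t)).

Lemma picard_sol_approx (c a t : R) (k : nat) :
  Rabs (picard_sol c a t - picard c a k t) <= 2 * ((Rabs c + M) * exp_weight L t) * (/ 2) ^ k.
Proof.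
  apply (Lim_seq_geometric_bound (fun k => picard c a k t)). intro j.
  eapply Rle_trans; [apply picard_step | right; ring].
Qed.

Lemma picard_sol_lipschitz (c a : R) : is_lipschitz (Rabs c + M) (picard_sol c a).
Proof.
  intros t s. enough (Rabs (picard_sol c a t - picard_sol c a s) - (Rabs c + M) * Rabs (t - s) <= 0) by lra.
  apply (le_0_of_le_geom _ (2 * ((Rabs c + M) * exp_weight L t) + 2 * ((Rabs c + M) * exp_weight L s))).
  intro k. pose proof (Rabs_triang3 (picard_sol c a t) (picard_sol c a s) (picard c a k t) (picard c a k s)).
  pose proof (picard_sol_approx c a t k). pose proof (picard_sol_approx c a s k).
  pose proof (picard_lipschitz c a k t s). lra.
Qed.

Lemma picard_sol_fixpoint (c a t : R) : picard_sol c a t = picard_map G c a (picard_sol c a) t.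
Proof.
  set (N := Rabs c + M).
  enough (Rabs (picard_sol c a t - picard_map G c a (picard_sol c a) t) <= 0)
    by (pose proof (Rabs_pos (picard_sol c a t - picard_map G c a (picard_sol c a) t));
        apply Rminus_diag_uniq, Rabs_eq_0; lra).
  apply (le_0_of_le_geom _ (2 * N * exp_weight L t)). intro k.
  pose proof (Rabs_triang3 (picard_sol c a t) (picard_map G c a (picard_sol c a) t)
                (picard c a (S k) t) (picard_map G c a (picard_sol c a) t)) as Htri.
  rewrite Rminus_diag, Rabs_R0, Rplus_0_r in Htri.
  pose proof (picard_sol_approx c a t (S k)) as Happrox.
  pose proof (picard_map_contraction c a N c a N (2 * N * (/ 2) ^ k) (picard c a k) (picard_sol c a)
    (picard_lipschitz c a k) (picard_sol_lipschitz c a)) as Hcontr.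
  refine (Rle_trans _ _ _ Htri _).
  simpl picard in Happrox |- *. rewrite !Rminus_diag, Rabs_R0 in Hcontr.
  assert (Hstep : Rabs (picard_map G c a (picard c a k) t - picard_map G c a (picard_sol c a) t)
                  <= N * (/ 2) ^ k * exp_weight L t).
  { eapply Rle_trans; [apply Hcontr|right; field].
    intro s. rewrite Rabs_minus_sym. eapply Rle_trans; [apply picard_sol_approx | right; unfold N; ring]. }
  fold N in Happrox. simpl pow in Happrox. lra.
Qed.

Lemma picard_sol_is_ode_sol (c a : R) : is_ode_sol G c a (picard_sol c a).
Proof.
  split; [rewrite picard_sol_fixpoint; apply picard_map_0|].
  intro t. apply (is_derive_ext (picard_map G c a (picard_sol c a)));
    [intro; symmetry; apply picard_sol_fixpoint|].
  exact (picard_map_derive c a _ _ (picard_sol_lipschitz c a) t).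
Qed.

Lemma ode_sol_lipschitz (c a : R) (v : R -> R) : is_ode_sol G c a v -> is_lipschitz (Rabs c + M) v.
Proof.
  intros [_ Hd]. apply (lipschitz_of_derive_bound v _ _ Hd).
  intro t. eapply Rle_trans; [apply Rabs_triang|]. rewrite Rabs_Ropp. specialize (G_bound (v t) t). lra.
Qed.

Lemma ode_sol_fixpoint (c a : R) (v : R -> R) : is_ode_sol G c a v -> forall t, v t = picard_map G c a v t.
Proof.
  intros Hv t. pose proof Hv as [H0 Hd].
  assert (Hint : is_RInt (fun s => c - G (v s) s) 0 t (minus (v t) (v 0))).
  { apply (is_RInt_derive (V := R_CompleteNormedModule) v); [intros; apply Hd|].
    intros; now apply ode_rhs_continuous with (Rabs c + M), (ode_sol_lipschitz c a). }
  unfold picard_map. rewrite (is_RInt_unique _ _ _ _ Hint), H0. unfold minus, plus, opp; simpl. ring.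
Qed.

Lemma ode_sol_dependence (c1 a1 c2 a2 : R) (v1 v2 : R -> R) :
  is_ode_sol G c1 a1 v1 -> is_ode_sol G c2 a2 v2 ->
  forall t, Rabs (v1 t - v2 t) <= 2 * (Rabs (a1 - a2) + Rabs (c1 - c2)) * exp_weight L t.
Proof.
  intros H1 H2.
  pose proof (ode_sol_lipschitz c1 a1 v1 H1) as Hl1. pose proof (ode_sol_lipschitz c2 a2 v2 H2) as Hl2.
  apply (weighted_bound_halving (fun s => Rabs (v1 s - v2 s)) (exp_weight L) _
           (Rabs c1 + M + (Rabs c2 + M) + Rabs (a1 - a2))).
  - intros K HK s. rewrite (ode_sol_fixpoint c1 a1 v1 H1 s), (ode_sol_fixpoint c2 a2 v2 H2 s).
    exact (picard_map_contraction c1 a1 _ c2 a2 _ K v1 v2 Hl1 Hl2 HK s).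
  - intro s. destruct H1 as [E1 _]. destruct H2 as [E2 _].
    pose proof (Rabs_triang3 (v1 s) (v2 s) a1 a2).
    specialize (Hl1 s 0). specialize (Hl2 s 0). rewrite E1, Rminus_0_r in Hl1. rewrite E2, Rminus_0_r in Hl2.
    pose proof (exp_weight_ge L s L_ge1). pose proof (Rabs_pos s). pose proof (Rabs_pos c1).
    pose proof (Rabs_pos c2). pose proof (Rabs_pos (a1 - a2)). pose proof G_bound_ge0. nra.
Qed.

Lemma ode_sol_drift (c a : R) (v : R -> R) : is_ode_sol G c a v ->
  forall t, Rabs (v t - a - c * t) <= M * Rabs t.
Proof.
  intros [H0 Hd] t.
  assert (Hdrift : forall x, is_derive (fun s => v s - c * s) x (- G (v x) x)).
  { intro x. replace (- G (v x) x) with ((c - G (v x) x) - c) by ring.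
    apply (is_derive_minus v (fun s => c * s)); [apply Hd | auto_derive; [exact I | ring]]. }
  pose proof (lipschitz_of_derive_bound _ _ M Hdrift
    ltac:(intro; cbv beta; rewrite Rabs_Ropp; apply G_bound) t 0) as Hlip.
  cbv beta in Hlip. rewrite H0, Rmult_0_r, !Rminus_0_r in Hlip.
  replace (v t - a - c * t) with (v t - c * t - a) by ring. exact Hlip.
Qed.

Lemma ode_sol_lt_of_lt (c1 c2 a : R) (v1 v2 : R -> R) : c1 < c2 ->
  is_ode_sol G c1 a v1 -> is_ode_sol G c2 a v2 -> forall t, 0 < t -> v1 t < v2 t.
Proof.
  intros Hc [E1 D1] [E2 D2] t Ht.
  enough (0 < v2 t - v1 t) by lra.
  apply (transversal_pos_after (fun s => v2 s - v1 s)
           (fun s => (c2 - G (v2 s) s) - (c1 - G (v1 s) s))) with 0.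
  - intro s. apply (is_derive_minus v2 v1); [apply D2 | apply D1].
  - intros s Hs. replace (v2 s) with (v1 s) by lra. lra.
  - exact Ht.
  - rewrite E1, E2. lra.
Qed.

Hypothesis G_per : forall u t, G u (t + 1) = G u t.

Lemma ode_sol_periodic (c a : R) (v : R -> R) : is_ode_sol G c a v -> v 1 = a -> periodic1 v.
Proof.
  intros Hv H1 t. pose proof Hv as [_ Hd].
  assert (Hshift : is_ode_sol G c a (fun s => v (s + 1))).
  { split; [now rewrite Rplus_0_l|]. intro s. rewrite <- G_per. now apply is_derive_shift. }
  pose proof (ode_sol_dependence c a c a _ _ Hshift Hv t) as Hdep.
  rewrite !Rminus_diag, Rabs_R0, Rplus_0_r, Rmult_0_r, Rmult_0_l in Hdep.
  pose proof (Rabs_pos (v (t + 1) - v t)). apply Rminus_diag_uniq, Rabs_eq_0. lra.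
Qed.

Lemma picard_sol_1_bounds (c a : R) : c - M <= picard_sol c a 1 - a <= c + M.
Proof.
  pose proof (ode_sol_drift c a _ (picard_sol_is_ode_sol c a) 1) as Hd.
  rewrite Rmult_1_r, Rabs_R1, Rmult_1_r in Hd. apply Rabs_le_between in Hd. lra.
Qed.

Lemma picard_sol_1_lipschitz_speed (a : R) :
  is_lipschitz (2 * exp_weight L 1) (fun c => picard_sol c a 1).
Proof.
  intros c c'. pose proof (ode_sol_dependence c a c' a _ _
    (picard_sol_is_ode_sol c a) (picard_sol_is_ode_sol c' a) 1) as Hdep.
  rewrite Rminus_diag, Rabs_R0, Rplus_0_l in Hdep. lra.
Qed.

Lemma return_speed_exists (a : R) : {c | picard_sol c a 1 = a}.
Proof.
  destruct (IVT (fun c => picard_sol c a 1 - a) (- M - 1) (M + 1)) as [c [_ Hc]].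
  - intro c. apply continuity_pt_filterlim.
    apply (continuous_minus (V := R_NormedModule) (fun c => picard_sol c a 1) (fun _ => a));
      [apply (continuous_of_lipschitz _ _ (picard_sol_1_lipschitz_speed a)) | apply continuous_const].
  - pose proof G_bound_ge0. lra.
  - pose proof (picard_sol_1_bounds (- M - 1) a). lra.
  - pose proof (picard_sol_1_bounds (M + 1) a). lra.
  - exists c. lra.
Qed.

Let return_speed (a : R) : R := proj1_sig (return_speed_exists a).

Lemma return_speed_spec (a : R) : picard_sol (return_speed a) a 1 = a.
Proof. exact (proj2_sig (return_speed_exists a)). Qed.

Lemma return_speed_bound (a : R) : Rabs (return_speed a) <= M.
Proof.
  pose proof (picard_sol_1_bounds (return_speed a) a) as Hb. rewrite return_speed_spec in Hb.
  apply Rabs_le. lra.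
Qed.

Lemma return_speed_lt (a c : R) : a < picard_sol c a 1 -> return_speed a < c.
Proof.
  intro Hc. apply Rnot_le_lt. intros [Hlt|Heq]; [|subst c; rewrite return_speed_spec in Hc; lra].
  pose proof (ode_sol_lt_of_lt c (return_speed a) a _ _ Hlt (picard_sol_is_ode_sol c a)
    (picard_sol_is_ode_sol _ a) 1 Rlt_0_1) as Hmono. rewrite return_speed_spec in Hmono. lra.
Qed.

Lemma return_speed_gt (a c : R) : picard_sol c a 1 < a -> c < return_speed a.
Proof.
  intro Hc. apply Rnot_le_lt. intros [Hlt|Heq]; [|subst c; rewrite return_speed_spec in Hc; lra].
  pose proof (ode_sol_lt_of_lt (return_speed a) c a _ _ Hlt (picard_sol_is_ode_sol _ a)
    (picard_sol_is_ode_sol c a) 1 Rlt_0_1) as Hmono. rewrite return_speed_spec in Hmono. lra.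
Qed.

(* Overshooting by [eps] in the speed moves the return point by a definite amount, which
   a small change of the initial value cannot undo. *)
Lemma return_speed_continuous (a : R) : continuous return_speed a.
Proof.
  apply continuous_eps_delta. intros eps Heps.
  set (c := return_speed a). assert (Hc : picard_sol c a 1 = a) by apply return_speed_spec.
  set (E := 2 * exp_weight L 1).
  assert (HE : 0 < E) by (unfold E; pose proof (exp_weight_ge1 L 1 ltac:(lra)); lra).
  set (gap_up := picard_sol (c + eps) a 1 - a). set (gap_down := a - picard_sol (c - eps) a 1).
  assert (Hup : 0 < gap_up).
  { pose proof (ode_sol_lt_of_lt c (c + eps) a _ _ ltac:(lra) (picard_sol_is_ode_sol c a)
      (picard_sol_is_ode_sol _ a) 1 Rlt_0_1). unfold gap_up. lra. }
  assert (Hdown : 0 < gap_down).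
  { pose proof (ode_sol_lt_of_lt (c - eps) c a _ _ ltac:(lra) (picard_sol_is_ode_sol _ a)
      (picard_sol_is_ode_sol c a) 1 Rlt_0_1). unfold gap_down. lra. }
  exists (Rmin gap_up gap_down / (E + 1)). split; [apply Rdiv_lt_0_compat; [now apply Rmin_pos | lra]|].
  intros a' Ha'.
  apply (Rmult_lt_compat_r (E + 1)) in Ha'; [|lra].
  replace (Rmin gap_up gap_down / (E + 1) * (E + 1)) with (Rmin gap_up gap_down) in Ha' by (field; lra).
  pose proof (Rmin_l gap_up gap_down). pose proof (Rmin_r gap_up gap_down).
  assert (Hda : - Rabs (a' - a) <= a' - a <= Rabs (a' - a)) by (apply Rabs_le_between; lra).
  pose proof (Rabs_pos (a' - a)).
  assert (Hdep : forall c0, Rabs (picard_sol c0 a' 1 - picard_sol c0 a 1) <= E * Rabs (a' - a)).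
  { intro c0. pose proof (ode_sol_dependence c0 a' c0 a _ _ (picard_sol_is_ode_sol c0 a')
      (picard_sol_is_ode_sol c0 a) 1) as Hd. rewrite Rminus_diag, Rabs_R0, Rplus_0_r in Hd.
    unfold E. lra. }
  apply Rabs_lt_between. split.
  - enough (c - eps < return_speed a') by lra. apply return_speed_gt.
    specialize (Hdep (c - eps)). apply Rabs_le_between in Hdep. unfold gap_down in *. nra.
  - enough (return_speed a' < c + eps) by lra. apply return_speed_lt.
    specialize (Hdep (c + eps)). apply Rabs_le_between in Hdep. unfold gap_up in *. nra.
Qed.

Let orbit_mean (a : R) : R := RInt (picard_sol (return_speed a) a) 0 1.

Lemma orbit_mean_near (a : R) : Rabs (orbit_mean a - a) <= 2 * M.
Proof.
  set (v := picard_sol (return_speed a) a).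
  assert (Hv : is_ode_sol G (return_speed a) a v) by apply picard_sol_is_ode_sol.
  assert (Hcont : forall s, continuous v s)
    by apply (continuous_of_lipschitz _ _ (ode_sol_lipschitz _ _ _ Hv)).
  assert (Hmean : orbit_mean a - a = RInt (fun s => v s - a) 0 1).
  { rewrite RInt_minus_continuous by (auto; intro; apply continuous_const).
    rewrite RInt_const. unfold scal; simpl; unfold mult; simpl. unfold orbit_mean. fold v. ring. }
  rewrite Hmean.
  replace (2 * M) with ((1 - 0) * (2 * M)) by ring.
  apply abs_RInt_le_const; [lra | apply ex_RInt_of_continuous; intro s;
    apply (continuous_minus (V := R_NormedModule)); [apply Hcont | apply continuous_const] |].
  intros t Ht. cbv beta. destruct Hv as [H0 _].
  pose proof (ode_sol_lipschitz _ _ _ (picard_sol_is_ode_sol (return_speed a) a) t 0) as Hl.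
  fold v in Hl. rewrite H0, Rminus_0_r, (Rabs_right t) in Hl by lra.
  pose proof (return_speed_bound a). pose proof (Rabs_pos (return_speed a)). nra.
Qed.

Lemma orbit_mean_continuous (a : R) : continuous orbit_mean a.
Proof.
  set (E := 2 * exp_weight L 1).
  assert (HE : 0 < E) by (unfold E; pose proof (exp_weight_ge1 L 1 ltac:(lra)); lra).
  assert (Hdiff : forall a', Rabs (orbit_mean a' - orbit_mean a)
                             <= E * (Rabs (a' - a) + Rabs (return_speed a' - return_speed a))).
  { intro a'. unfold orbit_mean.
    set (v' := picard_sol (return_speed a') a'). set (v := picard_sol (return_speed a) a).
    assert (Hv' : is_ode_sol G (return_speed a') a' v') by apply picard_sol_is_ode_sol.
    assert (Hv : is_ode_sol G (return_speed a) a v) by apply picard_sol_is_ode_sol.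
    pose proof (continuous_of_lipschitz _ _ (ode_sol_lipschitz _ _ _ Hv')) as Hc'.
    pose proof (continuous_of_lipschitz _ _ (ode_sol_lipschitz _ _ _ Hv)) as Hc.
    rewrite <- RInt_minus_continuous by auto.
    replace (E * (Rabs (a' - a) + Rabs (return_speed a' - return_speed a)))
      with ((1 - 0) * (E * (Rabs (a' - a) + Rabs (return_speed a' - return_speed a)))) by ring.
    apply abs_RInt_le_const; [lra | apply ex_RInt_of_continuous; intro s;
      apply (continuous_minus (V := R_NormedModule)); auto |].
    intros t Ht. cbv beta. eapply Rle_trans; [apply (ode_sol_dependence _ _ _ _ _ _ Hv' Hv t)|].
    unfold E. pose proof (Rabs_pos (a' - a)). pose proof (Rabs_pos (return_speed a' - return_speed a)).
    assert (exp_weight L t <= exp_weight L 1)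
      by (apply exp_weight_le; [lra | rewrite Rabs_R1, Rabs_right; lra]).
    nra. }
  apply continuous_eps_delta. intros eps Heps.
  set (eta := eps / (2 * E)). assert (Heta : 0 < eta) by (apply Rdiv_lt_0_compat; lra).
  destruct (proj1 (continuous_eps_delta return_speed a) (return_speed_continuous a) eta Heta)
    as [d [Hd Hnear]].
  exists (Rmin d eta). split; [now apply Rmin_pos|].
  intros a' Ha'. eapply Rle_lt_trans; [apply Hdiff|].
  pose proof (Hnear a' (Rlt_le_trans _ _ _ Ha' (Rmin_l d eta))).
  pose proof (Rlt_le_trans _ _ _ Ha' (Rmin_r d eta)).
  replace eps with (E * (eta + eta)) by (unfold eta; field; lra).
  apply Rmult_lt_compat_l; lra.
Qed.

Lemma periodic_orbit_exists (theta : R) :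
  exists c u, periodic1 u /\ (forall t, is_derive u t (c - G (u t) t)) /\ RInt u 0 1 = theta.
Proof.
  pose proof G_bound_ge0.
  destruct (IVT (fun a => orbit_mean a - theta) (theta - 2 * M - 1) (theta + 2 * M + 1)) as [a [_ Ha]].
  - intro a. apply continuity_pt_filterlim.
    apply (continuous_minus (V := R_NormedModule)); [apply orbit_mean_continuous | apply continuous_const].
  - lra.
  - pose proof (orbit_mean_near (theta - 2 * M - 1)) as Hm. apply Rabs_le_between in Hm. lra.
  - pose proof (orbit_mean_near (theta + 2 * M + 1)) as Hm. apply Rabs_le_between in Hm. lra.
  - pose proof (picard_sol_is_ode_sol (return_speed a) a) as Hv.
    exists (return_speed a), (picard_sol (return_speed a) a). split; [|split].
    + exact (ode_sol_periodic _ _ _ Hv (return_speed_spec a)).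
    + apply Hv.
    + unfold orbit_mean in Ha. lra.
Qed.

End LipschitzODE.

Section PeriodicOrbitBounds.

Variables (G : R -> R -> R) (c : R) (u : R -> R).
Hypothesis u_per : periodic1 u.
Hypothesis u_ode : forall t, is_derive u t (c - G (u t) t).

Lemma periodic_orbit_speed_le (a U : R) : (forall t, G (u a) t <= U) -> c <= U.
Proof.
  intro HU. apply Rnot_lt_le. intro Hc.
  apply (periodic_no_transversal_zero (fun t => u t - u a) (fun t => c - G (u t) t)) with a.
  - intro t. cbv beta. now rewrite u_per.
  - intro t. now apply is_derive_minus_const.
  - intros t Ht. replace (u t) with (u a) by lra. specialize (HU t). lra.
  - lra.
Qed.

Lemma periodic_orbit_le (pp : R) :
  (forall p t, pp < p -> c < G p t) -> (exists a, u a <= pp) -> forall x, u x <= pp.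
Proof.
  intros Habove [a Ha] x. apply Rnot_lt_le. intro Hx.
  set (p := (u x + pp) / 2).
  destruct (periodic_value_after u u_per a x) as [b [Hab Hb]].
  enough (0 < p - u b) by (unfold p in *; lra).
  apply (transversal_pos_after (fun t => p - u t) (fun t => - (c - G (u t) t))) with a.
  - intro t. apply (is_derive_ext (fun t => - (u t - p))); [intro s; simpl; ring|].
    apply (is_derive_opp (fun t => u t - p)), is_derive_minus_const, u_ode.
  - intros t Ht. replace (u t) with p by lra. specialize (Habove p t ltac:(unfold p; lra)). lra.
  - exact Hab.
  - unfold p. lra.
Qed.

End PeriodicOrbitBounds.

Lemma periodic_orbit_ge (G : R -> R -> R) (c pm : R) (u : R -> R) :
  periodic1 u -> (forall t, is_derive u t (c - G (u t) t)) ->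
  (forall p t, p < pm -> c < G p t) -> (exists a, pm <= u a) -> forall x, pm <= u x.
Proof.
  intros Hper Hode Hbelow [a Ha] x.
  (* [t |-> - u (- t)] is an orbit of the reflected field [(q, t) |-> G (- q) (- t)]. *)
  enough (Hrefl : - u (- - x) <= - pm) by (rewrite Ropp_involutive in Hrefl; lra).
  apply (periodic_orbit_le (fun q t => G (- q) (- t)) c (fun t => - u (- t))).
  - intro t. cbv beta. rewrite <- (Hper (- (t + 1))). do 2 f_equal. ring.
  - intro t. cbv beta. rewrite Ropp_involutive.
    replace (c - G (u (- t)) (- t)) with (opp (- (c - G (u (- t)) (- t)))) by (unfold opp; simpl; ring).
    apply (is_derive_opp (fun t => u (- t))), is_derive_reflect, Hode.
  - intros p t Hp. apply Hbelow. lra.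
  - exists (- a). cbv beta. rewrite Ropp_involutive. lra.
Qed.

Lemma Lub_Rbar_real (E : R -> Prop) (x0 B : R) : E x0 -> (forall y, E y -> y <= B) ->
  (forall y, E y -> y <= real (Lub_Rbar E)) /\ real (Lub_Rbar E) <= B.
Proof.
  intros H0 HB. destruct (Lub_Rbar_correct E) as [Hub Hleast].
  destruct (Lub_Rbar E) as [l| |]; simpl.
  - split; [exact Hub | exact (Hleast B HB)].
  - exfalso. exact (Hleast B HB).
  - exfalso. exact (Hub x0 H0).
Qed.

Lemma Glb_Rbar_real (E : R -> Prop) (x0 B : R) : E x0 -> (forall y, E y -> B <= y) ->
  (forall y, E y -> real (Glb_Rbar E) <= y) /\ B <= real (Glb_Rbar E).
Proof.
  intros H0 HB. destruct (Glb_Rbar_correct E) as [Hlb Hgreatest].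
  destruct (Glb_Rbar E) as [l| |]; simpl.
  - split; [exact Hlb | exact (Hgreatest B HB)].
  - exfalso. exact (Hlb x0 H0).
  - exfalso. exact (Hgreatest B HB).
Qed.

Definition clamp (K u : R) : R := Rmax (- K) (Rmin K u).

Lemma clamp_abs (K u : R) : 0 <= K -> Rabs (clamp K u) <= K.
Proof. intro HK. unfold clamp, Rmax, Rmin. repeat destruct Rle_dec; apply Rabs_le; lra. Qed.

Lemma clamp_lipschitz (K u v : R) : Rabs (clamp K u - clamp K v) <= Rabs (u - v).
Proof.
  pose proof (Rle_abs (u - v)). pose proof (Rle_abs (- (u - v))). rewrite Rabs_Ropp in H0.
  unfold clamp, Rmax, Rmin. repeat destruct Rle_dec; apply Rabs_le; lra.
Qed.

Lemma clamp_id (K u : R) : Rabs u <= K -> clamp K u = u.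
Proof. intro Hu. apply Rabs_le_between in Hu. unfold clamp, Rmax, Rmin. repeat destruct Rle_dec; lra. Qed.

Lemma clamp_cases (K u : R) : 0 <= K -> clamp K u = u \/ Rabs (clamp K u) = K.
Proof.
  intro HK. unfold clamp, Rmax, Rmin. repeat destruct Rle_dec;
    solve [left; lra | right; rewrite ?Rabs_Ropp; apply Rabs_right; lra].
Qed.

Section Truncation.

Variables (H : R -> R -> R) (K L : R).
Hypothesis K_ge0 : 0 <= K.
Hypothesis H_per : forall p x, H p (x + 1) = H p x.
Hypothesis H_lip : forall p q x y, Rabs p <= K -> Rabs q <= K ->
  Rabs (H p x - H q y) <= L * (Rabs (p - q) + Rabs (x - y)).

Lemma clamp_H_lipschitz (u v t s : R) :
  Rabs (H (clamp K u) t - H (clamp K v) s) <= Rmax L 1 * (Rabs (u - v) + Rabs (t - s)).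
Proof.
  eapply Rle_trans; [apply H_lip; apply clamp_abs, K_ge0|].
  pose proof (clamp_lipschitz K u v). pose proof (Rabs_pos (clamp K u - clamp K v)).
  pose proof (Rabs_pos (t - s)). pose proof (Rmax_l L 1). pose proof (Rmax_r L 1). nra.
Qed.

Lemma clamp_H_bounded (u t : R) : Rabs (H (clamp K u) t) <= Rabs (H 0 0) + Rmax L 1 * (K + 1).
Proof.
  destruct (periodic_reduce (H (clamp K u)) (H_per _) t) as [y [Hy ->]].
  pose proof (H_lip (clamp K u) 0 y 0 (clamp_abs K u K_ge0) ltac:(rewrite Rabs_R0; lra)) as Hl.
  rewrite !Rminus_0_r in Hl. pose proof (clamp_abs K u K_ge0).
  assert (Rabs y <= 1) by (apply Rabs_le; lra).
  pose proof (Rabs_pos (clamp K u)). pose proof (Rabs_pos y).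
  pose proof (Rmax_l L 1). pose proof (Rmax_r L 1).
  pose proof (Rabs_triang (H (clamp K u) y - H 0 0) (H 0 0)) as Htri.
  replace (H (clamp K u) y - H 0 0 + H 0 0) with (H (clamp K u) y) in Htri by ring. nra.
Qed.

End Truncation.

Lemma periodic_primitive (phi : R -> R) :
  (forall s, continuous phi s) -> periodic1 phi -> RInt phi 0 1 = 0 -> periodic1 (fun t => RInt phi 0 t).
Proof.
  intros Hc Hper H1 x.
  assert (Hconst : is_lipschitz 0 (fun t => RInt phi 0 (t + 1) - RInt phi 0 t)).
  { apply (lipschitz_of_derive_bound _ (fun t => phi (t + 1) - phi t));
      [|intro; cbv beta; rewrite Hper, Rminus_diag, Rabs_R0; lra].
    intro t. apply (is_derive_minus (fun t => RInt phi 0 (t + 1)) (fun t => RInt phi 0 t));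
      [apply is_derive_shift | ]; now apply is_derive_RInt_0. }
  specialize (Hconst x 0). cbv beta in Hconst.
  rewrite Rplus_0_l, H1, RInt_point, Rmult_0_l in Hconst. unfold zero in Hconst; simpl in Hconst.
  rewrite Rminus_diag, Rminus_0_r in Hconst.
  pose proof (Rabs_pos (RInt phi 0 (x + 1) - RInt phi 0 x)).
  apply Rminus_diag_uniq, Rabs_eq_0. lra.
Qed.

Lemma cell_solution_of_periodic_orbit (H : R -> R -> R) (theta c : R) (u : R -> R) :
  (forall z : R * R, continuous (fun w : R * R => H (fst w) (snd w)) z) ->
  periodic1 u -> (forall t, is_derive u t (c - H (u t) t)) -> RInt u 0 1 = theta ->
  cell_solution H theta c (fun t => RInt (fun s => u s - theta) 0 t)
  /\ forall t, Derive (fun t => RInt (fun s => u s - theta) 0 t) t = u t - theta.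
Proof.
  intros Hcont Hper Hode Hmean. set (F := fun t => RInt (fun s => u s - theta) 0 t).
  assert (Hu : forall s, continuous u s) by (intro s; exact (continuous_of_is_derive _ _ _ (Hode s))).
  assert (Hphi : forall s, continuous (fun s => u s - theta) s)
    by (intro s; apply (continuous_minus (V := R_NormedModule)); [apply Hu | apply continuous_const]).
  assert (DF : forall t, is_derive F t (u t - theta)) by exact (is_derive_RInt_0 _ Hphi).
  assert (DFe : forall t, Derive F t = u t - theta) by (intro; now apply is_derive_unique).
  assert (DDF : forall t, is_derive (Derive F) t (c - H (u t) t)).
  { intro t. apply (is_derive_ext (fun t => u t - theta)); [intro; now rewrite DFe|].
    now apply is_derive_minus_const. }
  assert (DDFe : forall t, Derive (Derive F) t = c - H (u t) t) by (intro; now apply is_derive_unique).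
  refine (conj (conj _ (conj (conj _ (conj _ _)) _)) DFe).
  - apply periodic_primitive; [exact Hphi | intro; cbv beta; now rewrite Hper |].
    rewrite RInt_minus_continuous, RInt_const by (auto; intro; apply continuous_const).
    unfold scal; simpl; unfold mult; simpl. lra.
  - intro x. now exists (u x - theta).
  - intro x. now exists (c - H (u x) x).
  - intro x. apply (continuous_ext (fun t => c - H (u t) t)); [intro; now rewrite DDFe|].
    apply (continuous_minus (V := R_NormedModule)); [apply continuous_const|].
    apply (continuous_comp_2 u (fun t => t) H); [apply Hu | apply continuous_id | apply Hcont].
  - intro x. rewrite DDFe, DFe. replace (theta + (u x - theta)) with (u x) by ring. ring.
Qed.

Lemma cell_solution_value_le (H : R -> R -> R) (theta c1 c2 : R) (F1 F2 : R -> R) :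
  cell_solution H theta c1 F1 -> cell_solution H theta c2 F2 -> c1 <= c2.
Proof.
  intros [P1 [[D1 [DD1 _]] E1]] [P2 [[D2 [DD2 _]] E2]]. apply Rnot_lt_le. intro Hc.
  set (w := fun t => Derive F1 t - Derive F2 t).
  destruct (periodic_derive_zero (fun t => F1 t - F2 t) w) as [a Ha].
  - intro t. cbv beta. now rewrite P1, P2.
  - intro t. apply (is_derive_minus F1 F2); now apply Derive_correct.
  - apply (periodic_no_transversal_zero w (fun t => Derive (Derive F1) t - Derive (Derive F2) t)) with a;
      [| | |exact Ha].
    + intro t. unfold w. now rewrite (Derive_periodic F1 P1 D1), (Derive_periodic F2 P2 D2).
    + intro t. apply (is_derive_minus (Derive F1) (Derive F2)); now apply Derive_correct.
    + intros t Ht. specialize (E1 t). specialize (E2 t). unfold w in Ht.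
      replace (Derive F1 t) with (Derive F2 t) in E1 by lra. lra.
Qed.

Section CellProblem.

Variable H : R -> R -> R.
Hypothesis H_cont : forall z : R * R, continuous (fun w : R * R => H (fst w) (snd w)) z.
Hypothesis H_coer : forall M : R, exists B : R, forall p x : R, B <= Rabs p -> M <= H p x.
Hypothesis H_per : forall p x : R, H p (x + 1) = H p x.
Hypothesis H_lip : forall B : R, 0 < B -> exists L : R, forall p q x y : R,
  Rabs p <= B -> Rabs q <= B -> Rabs (H p x - H q y) <= L * (Rabs (p - q) + Rabs (x - y)).
Variable theta : R.

Let sublevel (p : R) : Prop := exists x, 0 <= x <= 1 /\ H p x <= Ubar H theta.

Lemma H_le_Ubar (x : R) : H theta x <= Ubar H theta.
Proof.
  destruct (H_lip (Rabs theta + 1)) as [L HL]; [pose proof (Rabs_pos theta); lra|].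
  destruct (periodic_reduce (H theta) (H_per theta) x) as [y [Hy ->]].
  refine (proj1 (Lub_Rbar_real _ (H theta 0) (H theta 0 + Rabs L) _ _) _ _).
  - exists 0. split; [lra | reflexivity].
  - intros z [x' [Hx' ->]]. specialize (HL theta theta x' 0 ltac:(lra) ltac:(lra)).
    rewrite Rminus_diag, Rabs_R0, Rplus_0_l, Rminus_0_r in HL. apply Rabs_le_between in HL.
    assert (Rabs x' <= 1) by (apply Rabs_le; lra).
    pose proof (Rle_abs L). pose proof (Rabs_pos L). pose proof (Rabs_pos x'). nra.
  - exists y. split; [exact Hy | reflexivity].
Qed.

Lemma Ubar_coercive : exists K, Rabs theta < K /\ forall p x, K <= Rabs p -> Ubar H theta < H p x.
Proof.
  destruct (H_coer (Ubar H theta + 1)) as [B HB].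
  exists (Rmax B (Rabs theta + 1)). split; [pose proof (Rmax_r B (Rabs theta + 1)); lra|].
  intros p x Hp. pose proof (HB p x ltac:(pose proof (Rmax_l B (Rabs theta + 1)); lra)). lra.
Qed.

Lemma sublevel_theta : sublevel theta.
Proof. exists 0. split; [lra | apply H_le_Ubar]. Qed.

Section Radius.

Variable K : R.
Hypothesis K_coercive : forall p x, K <= Rabs p -> Ubar H theta < H p x.

Lemma sublevel_bounds (p : R) : sublevel p -> - K < p < K.
Proof.
  intros [x [_ Hx]]. apply Rabs_lt_between, Rnot_le_lt. intro Hp.
  specialize (K_coercive p x Hp). lra.
Qed.

Lemma sublevel_between (p : R) : sublevel p -> pminus H theta <= p <= pplus H theta.
Proof.
  intro Hp. split.
  - refine (proj1 (Glb_Rbar_real sublevel theta (- K) sublevel_theta _) p Hp).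
    intros y Hy. pose proof (sublevel_bounds y Hy). lra.
  - refine (proj1 (Lub_Rbar_real sublevel theta K sublevel_theta _) p Hp).
    intros y Hy. pose proof (sublevel_bounds y Hy). lra.
Qed.

Lemma pminus_pplus_bounds : - K <= pminus H theta /\ pplus H theta <= K.
Proof.
  split.
  - refine (proj2 (Glb_Rbar_real sublevel theta (- K) sublevel_theta _)).
    intros y Hy. pose proof (sublevel_bounds y Hy). lra.
  - refine (proj2 (Lub_Rbar_real sublevel theta K sublevel_theta _)).
    intros y Hy. pose proof (sublevel_bounds y Hy). lra.
Qed.

Lemma Ubar_lt_clamp_outside (p z : R) : 0 <= K ->
  p < pminus H theta \/ pplus H theta < p -> Ubar H theta < H (clamp K p) z.
Proof.
  intros HK Hp. destruct (clamp_cases K p HK) as [-> | HKp]; [|apply K_coercive; lra].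
  apply Rnot_le_lt. intro Hle.
  destruct (periodic_reduce (H p) (H_per p) z) as [y [Hy Hz]].
  assert (Hsub : sublevel p) by (exists y; split; [exact Hy | now rewrite <- Hz]).
  pose proof (sublevel_between p Hsub). lra.
Qed.

End Radius.

Lemma cell_solution_exists :
  exists c F, cell_solution H theta c F /\
              forall x, pminus H theta <= theta + Derive F x <= pplus H theta.
Proof.
  destruct Ubar_coercive as [K [HK HKcoer]].
  assert (K_pos : 0 < K) by (pose proof (Rabs_pos theta); lra).
  pose proof (Rlt_le _ _ K_pos) as K_ge0.
  destruct (H_lip K K_pos) as [L HL].
  set (G := fun q t => H (clamp K q) t).
  destruct (periodic_orbit_exists G (Rmax L 1) _ (Rmax_r L 1)
    (clamp_H_lipschitz H K L K_ge0 HL) (clamp_H_bounded H K L K_ge0 H_per HL)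
    (fun q t => H_per _ t) theta) as [c [u [Hper [Hode Hmean]]]].
  destruct (RInt_mean_value u (fun s => continuous_of_is_derive _ _ _ (Hode s))) as [a [_ Ha]].
  rewrite Hmean in Ha.
  assert (Hspeed : c <= Ubar H theta).
  { apply (periodic_orbit_speed_le G c u Hper Hode a). intro t.
    unfold G. rewrite Ha, clamp_id by lra. apply H_le_Ubar. }
  destruct (pminus_pplus_bounds K HKcoer) as [HmK HpK].
  pose proof (sublevel_between K HKcoer theta sublevel_theta) as Htheta.
  assert (Hbounds : forall x, pminus H theta <= u x <= pplus H theta).
  { intro x. split.
    - apply (periodic_orbit_ge G c _ _ Hper Hode); [|exists a; lra].
      intros p t Hp. unfold G.
      pose proof (Ubar_lt_clamp_outside K HKcoer p t K_ge0 (or_introl Hp)). lra.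
    - apply (periodic_orbit_le G c _ Hper Hode); [|exists a; lra].
      intros p t Hp. unfold G.
      pose proof (Ubar_lt_clamp_outside K HKcoer p t K_ge0 (or_intror Hp)). lra. }
  assert (HodeH : forall t, is_derive u t (c - H (u t) t)).
  { intro t. rewrite <- (clamp_id K (u t)); [apply Hode|].
    specialize (Hbounds t). apply Rabs_le. lra. }
  destruct (cell_solution_of_periodic_orbit H theta c u H_cont Hper HodeH Hmean) as [Hcell HDF].
  exists c, (fun t => RInt (fun s => u s - theta) 0 t). split; [exact Hcell|].
  intro x. rewrite HDF. replace (theta + (u x - theta)) with (u x) by ring. apply Hbounds.
Qed.

End CellProblem.

Theorem propositionC2 (H : R -> R -> R)
  (Hcont : forall z : R * R, continuous (fun w : R * R => H (fst w) (snd w)) z)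
  (Hcoer : forall M : R, exists B : R, forall p x : R, B <= Rabs p -> M <= H p x)
  (Hper : forall p x : R, H p (x + 1) = H p x)
  (Hlip : forall B : R, 0 < B -> exists L : R, forall p q x y : R,
      Rabs p <= B -> Rabs q <= B ->
      Rabs (H p x - H q y) <= L * (Rabs (p - q) + Rabs (x - y))) :
  forall theta : R, exists Hbar : R,
    (exists F : R -> R, cell_solution H theta Hbar F /\
       forall x, pminus H theta <= theta + Derive F x <= pplus H theta) /\
    (forall c : R, (exists G : R -> R, cell_solution H theta c G) -> c = Hbar).
Proof.
  intro theta.
  destruct (cell_solution_exists H Hcont Hcoer Hper Hlip theta) as [c [F [HF Hbounds]]].
  exists c. split; [now exists F|].
  intros c' [G HG]. apply Rle_antisym; eapply cell_solution_value_le; eassumption.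
Qed.
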